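(* Let $n\ge3$, $x^\Lambda\partial_k\in\mathcal{B}$ and $i\ge-1$. If $\mathrm{lev}_i(x^\Lambda\partial_k)\le i$, then there exists an integer $j$ with $-1\le j\le i$ such that $\mathrm{lev}_j(x^\Lambda\partial_k)=j$.
   Context: Fix an integer $n\ge 3$. A partition is a sequence $\Lambda=(\lambda_j)_{j\ge1}$ of non-negative integers with finite support; $\mathrm{wt}(\Lambda)=\sum_j j\lambda_j$; $\mathrm{Part}(k)$ is the set of partitions with $\lambda_j=0$ for $j>k$. Write $x^\Lambda=\prod_j x_j^{\lambda_j}$, $\deg(x^\Lambda)=\sum_j\lambda_j$. $\mathcal{B}=\{x^\Lambda\partial_k : 1\le k\le n,\ \Lambda\in\mathrm{Part}(k-1)\}$. For an integer $i\ge-1$, let $r_i\in\{1,\dots,n-1\}$ with $i\equiv r_i\pmod{n-1}$ and $h_i=\lfloor (i-1)/(n-1)\rfloor+1$. Define $\mathrm{WD}(x^\Lambda\partial_k)=\mathrm{wt}(\Lambda)-\deg(x^\Lambda)+n-k$ and $\mathrm{lev}_i(x^\Lambda\partial_k)=h_i\,\mathrm{WD}(x^\Lambda\partial_k)+\deg(x^\Lambda)-1$. *)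

From mathcomp Require Import all_boot all_order all_algebra.
Set Implicit Arguments. Unset Strict Implicit. Unset Printing Implicit Defensive.
Import Order.TTheory GRing.Theory Num.Theory.

(* A partition Λ = (λ_j)_{j>=1} is encoded by a finite list [lam] with
   nth 0 lam (j-1) = λ_j; entries beyond the list are 0.
   Λ ∈ Part(k-1) iff size lam <= k-1. *)
Definition inPart (m : nat) (lam : seq nat) : bool := size lam <= m.

Definition wt (lam : seq nat) : nat := \sum_(j < size lam) j.+1 * nth 0 lam j.
Definition deg (lam : seq nat) : nat := \sum_(j < size lam) nth 0 lam j.

Definition inB (n k : nat) (lam : seq nat) : bool :=
  [&& 1 <= k, k <= n & inPart k.-1 lam].

Local Open Scope ring_scope.

(* h_i = floor((i-1)/(n-1)) + 1  (divz is floor division for positive divisor) *)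
Definition h (n : nat) (i : int) : int := ((i - 1) %/ (n%:Z - 1))%Z + 1.

Definition WD (n k : nat) (lam : seq nat) : int :=
  (wt lam)%:Z - (deg lam)%:Z + n%:Z - k%:Z.

Definition lev (n : nat) (i : int) (k : nat) (lam : seq nat) : int :=
  h n i * WD n k lam + (deg lam)%:Z - 1.

(* The integer sequence j |-> lev_j - j starts at lev_{-1} + 1 = deg(x^Λ) >= 0
   (since h_{-1} = 0) and, because h_j is nondecreasing in j and WD >= 0, it
   drops by at most 1 at each step.  If it is <= 0 at j = i, it must hit 0 on
   the way. *)
From mathcomp Require Import all_boot all_order all_algebra zify.
Import Order.TTheory GRing.Theory Num.Theory.
Local Open Scope ring_scope.

Lemma ex_zero_of_slow_descent {g : nat -> int} {m : nat} :
  0 <= g 0%N -> g m <= 0 -> (forall t, (t < m)%N -> g t - 1 <= g t.+1) ->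
  exists2 t, (t <= m)%N & g t = 0.
Proof.
elim: m => [g0 gm0 _ | m IH g0 gm1 step]; first by exists 0%N => //; lia.
have [gm0 | gm_pos] := lerP (g m) 0.
  have [t tm gt0] := IH g0 gm0 (fun t tm => step t (ltnW tm)).
  by exists t => //; exact: leqW.
by exists m.+1 => //; have := step m (ltnSn m); lia.
Qed.

Lemma deg_le_wt (lam : seq nat) : (deg lam <= wt lam)%N.
Proof. by apply: leq_sum => j _; apply: leq_pmull. Qed.

Lemma WD_ge0 {n k : nat} (lam : seq nat) : (k <= n)%N -> 0 <= WD n k lam.
Proof. by move=> kn; have := deg_le_wt lam; rewrite /WD; lia. Qed.

Lemma h_nondecreasing {n : nat} {a b : int} : (1 < n)%N -> a <= b -> h n a <= h n b.
Proof. by move=> n_gt1 ab; rewrite /h lerD2r; apply: lez_pdiv2r; lia. Qed.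

Lemma h_neg1 (n : nat) : (3 <= n)%N -> h n (-1) = 0.
Proof.
move=> n_ge3; rewrite /h.
have -> : -1 - 1 = -1 * (n%:Z - 1) + (n%:Z - 3) by lia.
rewrite divzMDl; last lia.
by rewrite divz_small; [rewrite addr0 addNr | apply/andP; split; lia].
Qed.

Lemma lev_nondecreasing {n k : nat} (lam : seq nat) {a b : int} :
  (1 < n)%N -> (k <= n)%N -> a <= b -> lev n a k lam <= lev n b k lam.
Proof.
move=> n_gt1 kn ab; rewrite /lev !lerD2r.
exact: ler_wpM2r (WD_ge0 lam kn) _ _ (h_nondecreasing n_gt1 ab).
Qed.

Lemma lev_neg1 (n k : nat) (lam : seq nat) :
  (3 <= n)%N -> lev n (-1) k lam = (deg lam)%:Z - 1.
Proof. by move=> n_ge3; rewrite /lev h_neg1 // mul0r add0r. Qed.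

Theorem lemma2p5 (n k : nat) (lam : seq nat) (i : int) :
  (3 <= n)%N -> inB n k lam -> -1 <= i ->
  lev n i k lam <= i ->
  exists j : int, [/\ -1 <= j, j <= i & lev n j k lam = j].
Proof.
move=> n_ge3 /and3P[_ kn _] i_ge lev_i.
have n_gt1 : (1 < n)%N by lia.
pose g t := lev n (t%:Z - 1) k lam - (t%:Z - 1).
have [m i_eq] : exists m : nat, i = m%:Z - 1 by exists (absz (i + 1)); lia.
have g0 : 0 <= g 0%N by rewrite /g lev_neg1 //; lia.
have gm : g m <= 0 by rewrite /g -i_eq; lia.
have step t : (t < m)%N -> g t - 1 <= g t.+1.
  have t_le : t%:Z - 1 <= t.+1%:Z - 1 by lia.
  by have := lev_nondecreasing lam n_gt1 kn t_le; rewrite /g; lia.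
have [t tm] := ex_zero_of_slow_descent g0 gm step; rewrite /g => gt0.
by exists (t%:Z - 1); split; rewrite ?i_eq; lia.
Qed.
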